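(* Let $n\ge 1$, let $p\in[1,\infty]$, and let $0\le x_0\le x_1\le\dots\le x_{n-1}<1$ and $0\le y_0\le y_1\le\dots\le y_{n-1}<1$ be real numbers. Let $\tilde y_j = y_{j \bmod n} + \lfloor j/n\rfloor$ for all $j\in\mathbb Z$ (the periodic unrolling of $\vec y$ onto the real line). Then the optimal value of the circular problem $$\min_{c\in[0,1),\ s\in\{0,\dots,n-1\}} \Big\| \big( d^\circ((x_i+c)\bmod 1,\ y_{(i+s)\bmod n}) \big)_{i=0}^{n-1} \Big\|_p$$ equals the optimal value of the linear problem $$\inf_{c\in\mathbb R,\ s\in\mathbb Z} \Big\| \big( |x_i+c-\tilde y_{i+s}| \big)_{i=0}^{n-1} \Big\|_p .$$
   Context: For $a,b\in[0,1)$, the circular distance is $d^\circ(a,b)=\min\{|a-b|,\,1-|a-b|\}$. $\|\cdot\|_p$ denotes the $\ell_p$ norm of a vector in $\mathbb R^n$ (the maximum of absolute values when $p=\infty$). *)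

From Stdlib Require Import Reals Lra Lia ZArith Arith.
Open Scope R_scope.

(* floor via Stdlib's [up] (up x = least integer > x) *)
Definition floorZ (x : R) : Z := (up x - 1)%Z.
Definition mod1 (x : R) : R := x - IZR (floorZ x).

Definition circ_dist (a b : R) : R := Rmin (Rabs (a - b)) (1 - Rabs (a - b)).

Inductive expo : Type := Fin (p : R) | Inf.
Definition valid_expo (e : expo) : Prop :=
  match e with Fin p => 1 <= p | Inf => True end.

(* x^p for x >= 0, with 0^p = 0 *)
Definition rpow (x p : R) : R :=
  if Req_EM_T x 0 then 0 else Rpower x p.

Fixpoint fsum (n : nat) (f : nat -> R) : R :=
  match n with O => 0 | S m => fsum m f + f m end.
Fixpoint fmaxabs (n : nat) (f : nat -> R) : R :=
  match n with O => 0 | S m => Rmax (fmaxabs m f) (Rabs (f m)) end.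

Definition lp_norm (e : expo) (n : nat) (v : nat -> R) : R :=
  match e with
  | Fin p => rpow (fsum n (fun i => rpow (Rabs (v i)) p)) (1 / p)
  | Inf => fmaxabs n v
  end.

Definition unroll (n : nat) (y : nat -> R) (j : Z) : R :=
  y (Z.to_nat (j mod Z.of_nat n)) + IZR (j / Z.of_nat n).

Definition circ_obj (e : expo) (n : nat) (x y : nat -> R) (c : R) (s : nat) : R :=
  lp_norm e n (fun i => circ_dist (mod1 (x i + c)) (y ((i + s) mod n)%nat)).

Definition lin_obj (e : expo) (n : nat) (x y : nat -> R) (c : R) (s : Z) : R :=
  lp_norm e n (fun i => Rabs (x i + c - unroll n y (Z.of_nat i + s)%Z)).

Definition is_inf (E : R -> Prop) (m : R) : Prop :=
  (forall z, E z -> m <= z) /\ (forall b, (forall z, E z -> b <= z) -> b <= m).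

Definition sorted01 (n : nat) (x : nat -> R) : Prop :=
  (forall i, (i < n)%nat -> 0 <= x i < 1) /\
  (forall i j, (i <= j < n)%nat -> x i <= x j).

From Stdlib Require Import Reals Lra Lia ZArith Arith Classical.
From Coquelicot Require Import Coquelicot.
Open Scope R_scope.

(* Write a_i = x_i + c and T = unroll n y; T is nondecreasing on Z and satisfies
   T (j + n) = T j + 1.  An assignment is a map j from {0,...,n-1} to Z, and its
   cost is the l_p cost of the residuals a_i - T (j i).  The proof has three parts.
   1. Circular <= linear: a linear residual x_i + c - y~_(i+s) differs by an
      integer from the circular residual of (c mod 1, s mod n), and the circular
      distance is the smallest absolute value over such integer translates.
   2. Linear <= circular: every circular distance is the absolute value of a
      residual a_i - T (j i), where j has pairwise distinct residues mod n and
      values in [-n, 3n].  A rearrangement argument turns such an assignment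
      into a consecutive one, j i = s + i, without increasing the cost: swapping
      the targets of two points that are matched "crosswise" never increases the
      cost, because t |-> |t|^p is convex for p >= 1 (and directly for the
      maximum).  Uncrossing the two extreme targets shrinks the window of values
      to width < n, and selection sort by such swaps then makes j consecutive.
   3. Attainment: the linear cost is continuous in c, hence has a minimum on
      [0,1] x [-n, 3n]; by 1 and 2 this is the global linear minimum, and it is
      also attained by the circular problem. *)

Lemma exp_le_mono a b : a <= b -> exp a <= exp b.
Proof. intros [H|H]; [left; apply exp_increasing; auto | subst; lra]. Qed.

(* Bernoulli's inequality in exponential form, for a real exponent p >= 1: by
   the mean value theorem for t |-> e^(pt) - p e^t, whose derivative
   p (e^(pt) - e^t) has the sign of t. *)
Lemma exp_bernoulli (p w : R) : 1 <= p -> 1 + p * (exp w - 1) <= exp (p * w).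
Proof.
  intros Hp.
  destruct (MVT_gen (fun t => exp (p * t) - p * exp t) 0 w
    (fun t => p * exp (p * t) - p * exp t)) as [c [Hc Heq]].
  - intros t _. auto_derive; auto; ring.
  - intros t _. apply continuity_pt_filterlim.
    apply (ex_derive_continuous (fun t => exp (p * t) - p * exp t)).
    auto_derive; auto.
  - simpl in Heq. rewrite Rmult_0_r, exp_0 in Heq.
    assert (Hsign : 0 <= (p * exp (p * c) - p * exp c) * (w - 0)).
    { destruct (Rle_dec 0 w) as [Hw|Hw].
      - rewrite Rmin_left, Rmax_right in Hc by lra.
        assert (exp c <= exp (p * c)) by (apply exp_le_mono; nra).
        apply Rmult_le_pos; nra.
      - rewrite Rmin_right, Rmax_left in Hc by lra.
        assert (exp (p * c) <= exp c) by (apply exp_le_mono; nra).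
        assert (0 <= p * exp c - p * exp (p * c)) by nra. nra. }
    lra.
Qed.

Lemma Rpower_bernoulli (p r : R) : 1 <= p -> 0 < r -> 1 + p * (r - 1) <= Rpower r p.
Proof.
  intros Hp Hr. unfold Rpower.
  pose proof (exp_bernoulli p (ln r) Hp) as H. rewrite exp_ln in H by auto. lra.
Qed.

Lemma rpow_0 p : rpow 0 p = 0.
Proof. unfold rpow. destruct (Req_EM_T 0 0); lra. Qed.

Lemma rpow_pos x p : 0 < x -> rpow x p = Rpower x p.
Proof. intros. unfold rpow. destruct (Req_EM_T x 0); [lra|auto]. Qed.

Lemma Rpower_pos x p : 0 < Rpower x p.
Proof. unfold Rpower. apply exp_pos. Qed.

Lemma rpow_ge0 x p : 0 <= rpow x p.
Proof. unfold rpow. destruct (Req_EM_T x 0). lra. left; apply Rpower_pos. Qed.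

Lemma rpow_le x y p : 0 <= x -> x <= y -> 0 < p -> rpow x p <= rpow y p.
Proof.
  intros Hx Hxy Hp. destruct (Req_EM_T x 0) as [->|Hx0].
  - rewrite rpow_0. apply rpow_ge0.
  - rewrite !rpow_pos by lra. apply Rle_Rpower_l; lra.
Qed.

(* The graph of z |-> z^p (p >= 1) lies above its tangent at any M > 0:
   Bernoulli's inequality applied to r = z / M. *)
Lemma rpow_tangent (p z M : R) : 1 <= p -> 0 <= z -> 0 < M ->
  Rpower M p + p * (Rpower M p / M) * (z - M) <= rpow z p.
Proof.
  intros Hp Hz HM. pose proof (Rpower_pos M p) as HR.
  destruct (Req_EM_T z 0) as [->|Hz0].
  - rewrite rpow_0. replace (Rpower M p + p * (Rpower M p / M) * (0 - M))
      with (Rpower M p * (1 - p)) by (field; lra). nra.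
  - rewrite rpow_pos by lra.
    replace z with (M * (z / M)) at 2 by (field; lra).
    rewrite <- Rpower_mult_distr by (try apply Rdiv_lt_0_compat; lra).
    pose proof (Rpower_bernoulli p (z / M) Hp ltac:(apply Rdiv_lt_0_compat; lra)).
    replace (Rpower M p + p * (Rpower M p / M) * (z - M))
      with (Rpower M p * (1 + p * (z / M - 1))) by (field; lra).
    apply Rmult_le_compat_l; lra.
Qed.

Definition psi (p t : R) : R := rpow (Rabs t) p.

Definition convex (phi : R -> R) : Prop :=
  forall u v l, 0 <= l <= 1 ->
    phi (l * u + (1 - l) * v) <= l * phi u + (1 - l) * phi v.

(* |t|^p is convex for p >= 1: |.| is convex, and z |-> z^p is nondecreasing
   and lies above its tangent at z = |l u + (1 - l) v|. *)
Lemma psi_convex p : 1 <= p -> convex (psi p).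
Proof.
  intros Hp u v l Hl. unfold psi.
  set (m := l * u + (1 - l) * v).
  assert (Htri : Rabs m <= l * Rabs u + (1 - l) * Rabs v).
  { unfold m. eapply Rle_trans. apply Rabs_triang.
    rewrite !Rabs_mult, (Rabs_right l), (Rabs_right (1 - l)) by lra. lra. }
  pose proof (rpow_ge0 (Rabs u) p). pose proof (rpow_ge0 (Rabs v) p).
  destruct (Req_EM_T (Rabs m) 0) as [Hm0|Hm0].
  - rewrite Hm0, rpow_0. nra.
  - assert (HM : 0 < Rabs m) by (pose proof (Rabs_pos m); lra).
    rewrite (rpow_pos _ _ HM).
    pose proof (rpow_tangent p (Rabs u) (Rabs m) Hp (Rabs_pos u) HM) as Tu.
    pose proof (rpow_tangent p (Rabs v) (Rabs m) Hp (Rabs_pos v) HM) as Tv.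
    set (R0 := Rpower (Rabs m) p) in *.
    set (K := p * (R0 / Rabs m)) in *.
    assert (HK : 0 <= K).
    { unfold K. apply Rmult_le_pos; [lra|].
      left. apply Rdiv_lt_0_compat; auto. apply Rpower_pos. }
    assert (l * rpow (Rabs u) p + (1 - l) * rpow (Rabs v) p >=
            l * (R0 + K * (Rabs u - Rabs m)) + (1 - l) * (R0 + K * (Rabs v - Rabs m))).
    { apply Rle_ge. apply Rplus_le_compat; apply Rmult_le_compat_l; lra. }
    assert (K * (l * Rabs u + (1 - l) * Rabs v - Rabs m) >= 0).
    { apply Rle_ge, Rmult_le_pos; lra. }
    nra.
Qed.

(* Indeed A - Q and
   B - P lie between B - Q and A - P and have the same sum. *)
Lemma convex_uncross phi A B P Q : convex phi -> B <= A -> P <= Q ->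
  phi (A - Q) + phi (B - P) <= phi (A - P) + phi (B - Q).
Proof.
  intros Hphi HAB HPQ.
  set (u := A - P). set (v := B - Q).
  destruct (Req_dec u v) as [Huv|Huv].
  - assert (A = B /\ P = Q) as [-> ->] by (unfold u, v in Huv; split; lra).
    unfold u, v; lra.
  - assert (Hlt : v < u) by (unfold u, v in *; lra).
    set (l := (Q - P) / (u - v)).
    assert (Hl : 0 <= l <= 1).
    { unfold l. split.
      - apply Rmult_le_pos; [lra|left; apply Rinv_0_lt_compat; lra].
      - apply (Rmult_le_reg_r (u - v)); [lra|]. unfold Rdiv.
        rewrite Rmult_assoc, Rinv_l by lra. unfold u, v; lra. }
    replace (A - Q) with ((1 - l) * u + (1 - (1 - l)) * v)
      by (unfold l, u, v; field; unfold u, v in Hlt; lra).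
    replace (B - P) with (l * u + (1 - l) * v)
      by (unfold l, u, v; field; unfold u, v in Hlt; lra).
    pose proof (Hphi u v (1 - l) ltac:(lra)). pose proof (Hphi u v l Hl). lra.
Qed.

(* Uncrossing for the maximum: A - Q and B - P lie between B - Q and A - P. *)
Lemma max_abs_uncross A B P Q : B <= A -> P <= Q ->
  Rmax (Rabs (A - Q)) (Rabs (B - P)) <= Rmax (Rabs (A - P)) (Rabs (B - Q)).
Proof.
  assert (between : forall u v w, v <= w <= u -> Rabs w <= Rmax (Rabs u) (Rabs v)).
  { intros u v w H. destruct (Rle_dec 0 w).
    - eapply Rle_trans; [|apply Rmax_l]. rewrite !Rabs_right by lra. lra.
    - eapply Rle_trans; [|apply Rmax_r]. rewrite !Rabs_left by lra. lra. }
  intros HAB HPQ. apply Rmax_lub; apply between; lra.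
Qed.

Lemma fsum_ext n f g : (forall i, (i < n)%nat -> f i = g i) -> fsum n f = fsum n g.
Proof. induction n; simpl; intros H; auto. rewrite IHn, H; auto. Qed.

Lemma fsum_le n f g : (forall i, (i < n)%nat -> f i <= g i) -> fsum n f <= fsum n g.
Proof.
  induction n; simpl; intros H. lra.
  pose proof (H n ltac:(lia)). pose proof (IHn ltac:(auto)). lra.
Qed.

Lemma fsum_ge0 n f : (forall i, (i < n)%nat -> 0 <= f i) -> 0 <= fsum n f.
Proof.
  intros H. replace 0 with (fsum n (fun _ => 0)) by (clear H; induction n; simpl; lra).
  apply fsum_le; auto.
Qed.

Lemma fsum_update n f f' k : (k < n)%nat ->
  (forall i, (i < n)%nat -> i <> k -> f' i = f i) ->
  fsum n f' = fsum n f + (f' k - f k).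
Proof.
  induction n; intros Hk H. lia. simpl.
  destruct (Nat.eq_dec n k) as [->|Hnk].
  - rewrite (fsum_ext k f' f) by (intros; apply H; lia). lra.
  - rewrite IHn by (auto; lia). rewrite (H n) by lia. lra.
Qed.

Lemma fmaxabs_ge0 n f : 0 <= fmaxabs n f.
Proof. induction n; simpl. lra. eapply Rle_trans; [apply IHn|apply Rmax_l]. Qed.

Lemma fmaxabs_ge_term n f i : (i < n)%nat -> Rabs (f i) <= fmaxabs n f.
Proof.
  induction n; intros Hi. lia. simpl. destruct (Nat.eq_dec i n) as [->|]. apply Rmax_r.
  eapply Rle_trans; [apply IHn; lia|apply Rmax_l].
Qed.

Lemma fmaxabs_le n f M : 0 <= M -> (forall i, (i < n)%nat -> Rabs (f i) <= M) ->
  fmaxabs n f <= M.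
Proof. induction n; simpl; intros HM H. auto. apply Rmax_lub; auto. Qed.

(* The l_p norm without its outer root: sum of |g i|^p, or max of |g i|.
   It is the quantity the rearrangement and continuity arguments work with. *)
Definition cost (e : expo) (n : nat) (g : nat -> R) : R :=
  match e with Fin p => fsum n (fun i => psi p (g i)) | Inf => fmaxabs n g end.

Lemma cost_ge0 e n g : 0 <= cost e n g.
Proof.
  destruct e; simpl. apply fsum_ge0; intros; apply rpow_ge0. apply fmaxabs_ge0.
Qed.

Lemma lp_norm_le_of_cost e n g h : valid_expo e -> cost e n g <= cost e n h ->
  lp_norm e n g <= lp_norm e n h.
Proof.
  intros He H. destruct e; simpl in *; auto.
  apply rpow_le; auto. apply (cost_ge0 (Fin p)). apply Rdiv_lt_0_compat; lra.
Qed.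

Lemma cost_le_abs e n g h : valid_expo e ->
  (forall i, (i < n)%nat -> Rabs (g i) <= Rabs (h i)) -> cost e n g <= cost e n h.
Proof.
  intros He H. destruct e; simpl in *.
  - apply fsum_le. intros. unfold psi. apply rpow_le; auto. apply Rabs_pos. lra.
  - apply fmaxabs_le. apply fmaxabs_ge0.
    intros. eapply Rle_trans. apply H; auto. apply fmaxabs_ge_term; auto.
Qed.

Lemma cost_eq_abs e n g h : valid_expo e ->
  (forall i, (i < n)%nat -> Rabs (g i) = Rabs (h i)) -> cost e n g = cost e n h.
Proof.
  intros He H. apply Rle_antisym; apply cost_le_abs; auto;
    intros i Hi; rewrite (H i Hi); apply Rle_refl.
Qed.

Lemma lp_norm_le_abs e n g h : valid_expo e ->
  (forall i, (i < n)%nat -> Rabs (g i) <= Rabs (h i)) -> lp_norm e n g <= lp_norm e n h.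
Proof. intros. apply lp_norm_le_of_cost, cost_le_abs; auto. Qed.

Lemma cost_uncross e n g g' k l A B P Q : valid_expo e ->
  (k < n)%nat -> (l < n)%nat -> k <> l ->
  (forall i, (i < n)%nat -> i <> k -> i <> l -> g' i = g i) ->
  B <= A -> P <= Q ->
  g k = A - P -> g l = B - Q -> g' k = A - Q -> g' l = B - P ->
  cost e n g' <= cost e n g.
Proof.
  intros He Hk Hl Hkl Hrest HAB HPQ Egk Egl Eg'k Eg'l. destruct e; simpl in *.
  - (* change g into g' one entry at a time, through g1 = g' at k, g elsewhere *)
    set (g1 := fun i => if Nat.eq_dec i k then g' k else g i).
    rewrite (fsum_update n (fun i => psi p (g1 i)) (fun i => psi p (g' i)) l); auto.
    2:{ intros i Hi Hil. unfold g1. destruct (Nat.eq_dec i k) as [->|]; auto.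
        rewrite Hrest; auto. }
    rewrite (fsum_update n (fun i => psi p (g i)) (fun i => psi p (g1 i)) k); auto.
    2:{ intros. unfold g1. destruct (Nat.eq_dec i k); [congruence|auto]. }
    unfold g1. destruct (Nat.eq_dec k k); [|congruence].
    destruct (Nat.eq_dec l k); [congruence|].
    rewrite Egk, Egl, Eg'k, Eg'l.
    pose proof (convex_uncross (psi p) A B P Q (psi_convex p He) HAB HPQ). lra.
  - pose proof (max_abs_uncross A B P Q HAB HPQ) as Hmax.
    rewrite <- Egk, <- Egl, <- Eg'k, <- Eg'l in Hmax.
    assert (Rmax (Rabs (g k)) (Rabs (g l)) <= fmaxabs n g).
    { apply Rmax_lub; apply fmaxabs_ge_term; auto. }
    apply fmaxabs_le. apply fmaxabs_ge0. intros i Hi.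
    destruct (Nat.eq_dec i k) as [->|].
    { eapply Rle_trans; [apply (Rmax_l _ (Rabs (g' l)))|]; lra. }
    destruct (Nat.eq_dec i l) as [->|].
    { eapply Rle_trans; [apply (Rmax_r (Rabs (g' k)))|]; lra. }
    rewrite Hrest; auto. apply fmaxabs_ge_term; auto.
Qed.

(* t^p tends to 0 at 0 because t^p <= t on (0,1). *)
Lemma rpow_le_self (p y : R) : 1 <= p -> 0 < y < 1 -> rpow y p <= y.
Proof.
  intros Hp Hy. rewrite rpow_pos by lra. unfold Rpower.
  assert (ln y < 0) by (rewrite <- ln_1; apply ln_increasing; lra).
  rewrite <- (exp_ln y) at 2 by lra. apply exp_le_mono. nra.
Qed.

(* |t|^p is continuous: at 0 by the bound above, elsewhere it is
   exp (p ln |t|). *)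
Lemma psi_continuous p t : 1 <= p -> continuous (psi p) t.
Proof.
  intros Hp. apply continuity_pt_filterlim.
  destruct (Req_dec t 0) as [->|Ht].
  - unfold continuity_pt, continue_in, limit1_in, limit_in. simpl. unfold R_dist.
    intros eps Heps. exists (Rmin 1 eps). split. apply Rmin_pos; lra.
    intros y [_ Hy]. unfold psi in *. rewrite Rabs_R0, rpow_0, Rminus_0_r in *.
    rewrite Rabs_right by (apply Rle_ge, rpow_ge0).
    pose proof (Rmin_l 1 eps). pose proof (Rmin_r 1 eps).
    destruct (Req_dec (Rabs y) 0) as [Hy0|Hy0]. rewrite Hy0, rpow_0. lra.
    pose proof (Rabs_pos y). pose proof (rpow_le_self p (Rabs y) Hp ltac:(lra)). lra.
  -
    assert (Ha : 0 < Rabs t) by (apply Rabs_pos_lt; auto).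
    apply (continuity_pt_locally_ext (fun y => exp (p * ln (Rabs y))) _ (Rabs t)); auto.
    + intros y Hy. unfold psi. unfold Rdist in Hy.
      assert (0 < Rabs y).
      { pose proof (Rabs_triang_inv t y) as H.
        replace (t - y) with (-(y - t)) in H by ring. rewrite Rabs_Ropp in H. lra. }
      rewrite rpow_pos by auto. reflexivity.
    + apply continuity_pt_filterlim.
      apply (ex_derive_continuous (fun y => exp (p * ln (Rabs y)))).
      auto_derive. repeat split; auto.
Qed.

(* max (f, g) = (f + g + |f - g|) / 2 is continuous with f and g. *)
Lemma Rmax_continuous (f g : R -> R) c : continuous f c -> continuous g c ->
  continuous (fun x => Rmax (f x) (g x)) c.
Proof.
  intros Hf Hg.
  apply (continuous_ext (fun x => (f x + g x + Rabs (f x - g x)) / 2)).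
  - intros x. unfold Rmax. destruct Rle_dec; unfold Rabs; destruct Rcase_abs; lra.
  - apply (continuous_scal_l (fun x => f x + g x + Rabs (f x - g x)) (/2)).
    apply (continuous_plus (fun x => f x + g x)). apply (continuous_plus f g); auto.
    apply continuous_Rabs_comp. apply (continuous_minus f g); auto.
Qed.

Lemma cost_continuous e n (G : nat -> R -> R) c : valid_expo e ->
  (forall i, continuous (G i) c) -> continuous (fun c => cost e n (fun i => G i c)) c.
Proof.
  intros He HG. destruct e; simpl in *; induction n; simpl; try apply continuous_const.
  - apply (continuous_plus (fun c => fsum n (fun i => psi p (G i c)))
      (fun c => psi p (G n c))); auto.
    apply (continuous_comp (G n) (psi p)); auto. apply psi_continuous; auto.
  - apply Rmax_continuous; auto. apply continuous_Rabs_comp; auto.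
Qed.

Lemma min_on_box (F : R -> Z -> R) lo : (forall s c, continuous (fun c => F c s) c) ->
  forall N : nat, exists c0 s0, 0 <= c0 <= 1 /\ (lo <= s0 <= lo + Z.of_nat N)%Z /\
  forall c s, 0 <= c <= 1 -> (lo <= s <= lo + Z.of_nat N)%Z -> F c0 s0 <= F c s.
Proof.
  intros HF.
  assert (Hm : forall s, exists c0, 0 <= c0 <= 1 /\
                 forall c, 0 <= c <= 1 -> F c0 s <= F c s).
  { intros s. destruct (continuity_ab_min (fun c => F c s) 0 1) as [m [H1 H2]]. lra.
    intros. apply continuity_pt_filterlim. apply HF. exists m; split; auto. }
  induction N as [|N IHN].
  - destruct (Hm lo) as [c0 [H1 H2]]. exists c0, lo. split; auto. split. lia.
    intros c s Hc Hs. replace s with lo by lia. auto.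
  - destruct IHN as [c1 [s1 [H1 [H2 H3]]]].
    set (top := (lo + Z.of_nat (S N))%Z).
    destruct (Hm top) as [c2 [H4 H5]].
    destruct (Rle_dec (F c1 s1) (F c2 top)) as [Hle|Hgt].
    + exists c1, s1. split; auto. split. lia. intros c s Hc Hs.
      destruct (Z.eq_dec s top) as [->|]; [eapply Rle_trans; eauto|apply H3; auto; lia].
    + exists c2, top. split; auto. split. unfold top; lia. intros c s Hc Hs.
      destruct (Z.eq_dec s top) as [->|]; [auto|].
      eapply Rle_trans; [|apply H3; auto; lia]. lra.
Qed.

Definition swap_idx (m k t : nat) : nat :=
  if Nat.eq_dec t m then k else if Nat.eq_dec t k then m else t.

Lemma swap_idx_lt n m k t : (m < n)%nat -> (k < n)%nat -> (t < n)%nat ->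
  (swap_idx m k t < n)%nat.
Proof. unfold swap_idx; intros; repeat destruct Nat.eq_dec; lia. Qed.

Lemma swap_idx_inj m k t t' : swap_idx m k t = swap_idx m k t' -> t = t'.
Proof. unfold swap_idx; repeat destruct Nat.eq_dec; lia. Qed.

Lemma argmin_from n (j : nat -> Z) m : (m < n)%nat -> exists k, (m <= k < n)%nat /\
  forall t, (m <= t < n)%nat -> (j k <= j t)%Z.
Proof.
  induction n; intros Hm. lia.
  destruct (Nat.eq_dec m n) as [->|Hne].
  - exists n. split. lia. intros t Ht. replace t with n by lia. lia.
  - destruct (IHn ltac:(lia)) as [k [Hk Hmin]].
    destruct (Z_le_gt_dec (j k) (j n)).
    + exists k. split. lia. intros t Ht.
      destruct (Nat.eq_dec t n). subst; lia. apply Hmin; lia.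
    + exists n. split. lia. intros t Ht.
      destruct (Nat.eq_dec t n). subst; lia. specialize (Hmin t ltac:(lia)). lia.
Qed.

Lemma increasing_tight n (j : nat -> Z) lo hi : (1 <= n)%nat ->
  (forall i k, (i < k < n)%nat -> (j i < j k)%Z) ->
  (forall i, (i < n)%nat -> (lo <= j i <= hi)%Z) -> (hi - lo <= Z.of_nat n - 1)%Z ->
  forall i, (i < n)%nat -> j i = (j 0%nat + Z.of_nat i)%Z.
Proof.
  intros Hn Hinc Hwin Hwidth.
  assert (Hgap : forall d i, (i + d < n)%nat -> (j (i + d)%nat - j i >= Z.of_nat d)%Z).
  { induction d; intros i Hi. rewrite Nat.add_0_r. lia.
    specialize (IHd i ltac:(lia)).
    specialize (Hinc (i + d)%nat (i + S d)%nat ltac:(lia)). lia. }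
  intros i Hi.
  pose proof (Hgap i 0%nat ltac:(lia)) as G1. rewrite Nat.add_0_l in G1.
  pose proof (Hgap (n - 1 - i)%nat i ltac:(lia)) as G2.
  replace (i + (n - 1 - i))%nat with (n - 1)%nat in G2 by lia.
  pose proof (Hwin 0%nat ltac:(lia)). pose proof (Hwin (n - 1)%nat ltac:(lia)).
  rewrite !Nat2Z.inj_sub in G2 by lia. lia.
Qed.

Lemma Zmod_plus_n (x n : Z) : ((x + n) mod n = x mod n)%Z.
Proof. replace (x + n)%Z with (x + 1 * n)%Z by ring. apply Z_mod_plus_full. Qed.

Lemma Zmod_minus_n (x n : Z) : ((x - n) mod n = x mod n)%Z.
Proof. replace (x - n)%Z with (x + (-1) * n)%Z by ring. apply Z_mod_plus_full. Qed.

Section Rearrangement.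

Variables (n : nat) (e : expo) (a : nat -> R) (T : Z -> R).
Hypothesis n_pos : (1 <= n)%nat.
Hypothesis e_valid : valid_expo e.
Hypothesis T_mono : forall j k, (j <= k)%Z -> T j <= T k.
Hypothesis T_period : forall j, T (j + Z.of_nat n)%Z = T j + 1.
Hypothesis a_sorted : forall i k, (i <= k < n)%nat -> a i <= a k.
Hypothesis a_spread : forall i k, (i < n)%nat -> (k < n)%nat -> a k <= a i + 1.

Definition assign_cost (j : nat -> Z) : R := cost e n (fun i => a i - T (j i)).

Definition distinct_residues (j : nat -> Z) : Prop :=
  forall i k, (i < n)%nat -> (k < n)%nat -> i <> k ->
    (j i mod Z.of_nat n <> j k mod Z.of_nat n)%Z.

Definition in_window (j : nat -> Z) (lo hi : Z) : Prop :=
  forall i, (i < n)%nat -> (lo <= j i <= hi)%Z.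

Definition sorted_prefix (m : nat) (j : nat -> Z) : Prop :=
  forall i k, (i < k)%nat -> (k < n)%nat -> (i < m)%nat -> (j i <= j k)%Z.

Lemma distinct_residues_neq j i k : distinct_residues j ->
  (i < n)%nat -> (k < n)%nat -> i <> k -> j i <> j k.
Proof. intros H Hi Hk Hne E. apply (H i k Hi Hk Hne). rewrite E; auto. Qed.

Lemma distinct_residues_swap j j' m k : (m < n)%nat -> (k < n)%nat ->
  distinct_residues j ->
  (forall t, (t < n)%nat ->
     (j' t mod Z.of_nat n = j (swap_idx m k t) mod Z.of_nat n)%Z) ->
  distinct_residues j'.
Proof.
  intros Hm Hk H Hc i i' Hi Hi' Hne. rewrite (Hc i Hi), (Hc i' Hi').
  apply H; try apply swap_idx_lt; auto.
  intro E. apply Hne. eapply swap_idx_inj; eauto.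
Qed.

(* One step of selection sort: swap the smallest remaining value into place m.
   The swap is an uncrossing, since a_m <= a_k and T (j k) <= T (j m). *)
Lemma selection_step m j lo hi : (m < n)%nat -> in_window j lo hi ->
  distinct_residues j -> sorted_prefix m j ->
  exists j', in_window j' lo hi /\ distinct_residues j' /\ sorted_prefix (S m) j' /\
    assign_cost j' <= assign_cost j.
Proof.
  intros Hm Hwin Hres Hsorted.
  destruct (argmin_from n j m Hm) as [k [Hk Hmin]].
  exists (fun t => j (swap_idx m k t)). split; [|split; [|split]].
  - intros i Hi. apply Hwin, swap_idx_lt; auto; lia.
  - apply (distinct_residues_swap j _ m k); auto; lia.
  - intros i i' Hii' Hi' Him. unfold swap_idx.
    destruct (Nat.eq_dec i m), (Nat.eq_dec i' m), (Nat.eq_dec i k), (Nat.eq_dec i' k);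
      subst; try lia; first [apply Hmin; lia | apply Hsorted; lia].
  - destruct (Nat.eq_dec k m) as [->|Hkm].
    + unfold assign_cost. right. apply cost_eq_abs; auto. intros t _. unfold swap_idx.
      repeat destruct Nat.eq_dec; subst; auto.
    + assert (Ha : a m <= a k) by (apply a_sorted; lia).
      assert (HT : T (j k) <= T (j m)) by (apply T_mono, Hmin; lia).
      unfold assign_cost.
      apply (cost_uncross e n _ _ k m (a k) (a m) (T (j k)) (T (j m))); auto; try lia;
        intros; unfold swap_idx; repeat destruct Nat.eq_dec; try lia; auto.
Qed.

Lemma selection_sort j lo hi : in_window j lo hi -> distinct_residues j ->
  exists j', in_window j' lo hi /\ distinct_residues j' /\ sorted_prefix n j' /\
    assign_cost j' <= assign_cost j.
Proof.
  assert (Hsort : forall d m j0, (n - m = d)%nat -> (m <= n)%nat ->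
    in_window j0 lo hi -> distinct_residues j0 -> sorted_prefix m j0 ->
    exists j', in_window j' lo hi /\ distinct_residues j' /\ sorted_prefix n j' /\
      assign_cost j' <= assign_cost j0).
  { induction d as [|d IHd]; intros m j0 Hd Hm Hwin Hres Hsorted.
    - replace m with n in Hsorted by lia. exists j0. split; [|split; [|split]]; auto. apply Rle_refl.
    - destruct (selection_step m j0 lo hi ltac:(lia) Hwin Hres Hsorted)
        as [j1 [Hwin1 [Hres1 [Hsorted1 Hcost1]]]].
      destruct (IHd (S m) j1 ltac:(lia) ltac:(lia) Hwin1 Hres1 Hsorted1)
        as [j2 [Hwin2 [Hres2 [Hsorted2 Hcost2]]]].
      exists j2. split; [|split; [|split]]; auto. lra. }
  intros Hwin Hres. apply (Hsort n 0%nat); auto; try lia. intros i k _ _ Hi; lia.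
Qed.

Lemma consecutive_of_narrow j lo hi : (hi - lo <= Z.of_nat n - 1)%Z ->
  in_window j lo hi -> distinct_residues j ->
  exists s, (lo <= s <= hi)%Z /\ assign_cost (fun i => s + Z.of_nat i)%Z <= assign_cost j.
Proof.
  intros Hwidth Hwin Hres.
  destruct (selection_sort j lo hi Hwin Hres) as [j' [Hwin' [Hres' [Hsorted Hcost]]]].
  assert (Hinc : forall i k, (i < k < n)%nat -> (j' i < j' k)%Z).
  { intros i k Hik. pose proof (Hsorted i k ltac:(lia) ltac:(lia) ltac:(lia)).
    pose proof (distinct_residues_neq j' i k Hres' ltac:(lia) ltac:(lia) ltac:(lia)). lia. }
  exists (j' 0%nat). split. apply Hwin'; lia.
  eapply Rle_trans; [|apply Hcost]. right. unfold assign_cost. apply cost_eq_abs; auto.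
  intros i Hi. rewrite (increasing_tight n j' lo hi n_pos Hinc Hwin' Hwidth i Hi). auto.
Qed.

(* In a window of width >= n, either an endpoint is unused, or the positions k
   and l using lo and hi can be rematched to hi - n and lo + n: this keeps the
   residues, is an uncrossing, and strictly narrows the window. *)
Lemma shrink_window j lo hi : (Z.of_nat n <= hi - lo)%Z ->
  in_window j lo hi -> distinct_residues j ->
  exists j' lo' hi', (lo <= lo')%Z /\ (hi' <= hi)%Z /\ (hi' - lo' < hi - lo)%Z /\
    in_window j' lo' hi' /\ distinct_residues j' /\ assign_cost j' <= assign_cost j.
Proof.
  intros Hwidth Hwin Hres.
  destruct (classic (exists k, (k < n)%nat /\ j k = lo)) as [[k [Hk Hjk]]|Hno].
  2:{ exists j, (lo + 1)%Z, hi.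
      split; [|split; [|split; [|split; [|split]]]]; auto; try lia; try lra.
      intros i Hi. pose proof (Hwin i Hi).
      assert (j i <> lo) by (intro; apply Hno; eauto). lia. }
  destruct (classic (exists l, (l < n)%nat /\ j l = hi)) as [[l [Hl Hjl]]|Hno].
  2:{ exists j, lo, (hi - 1)%Z.
      split; [|split; [|split; [|split; [|split]]]]; auto; try lia; try lra.
      intros i Hi. pose proof (Hwin i Hi).
      assert (j i <> hi) by (intro; apply Hno; eauto). lia. }
  assert (Hkl : k <> l) by (intro; subst; lia).
  assert (Hgap : (hi <> lo + Z.of_nat n)%Z).
  { intro E. apply (Hres k l Hk Hl Hkl). rewrite Hjk, Hjl, E, Zmod_plus_n. auto. }
  set (j' := fun t => if Nat.eq_dec t k then (hi - Z.of_nat n)%Z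
                      else if Nat.eq_dec t l then (lo + Z.of_nat n)%Z else j t).
  exists j', (lo + 1)%Z, (hi - 1)%Z.
  split; [|split; [|split; [|split; [|split]]]]; try lia.
  - intros t Ht. unfold j'. destruct (Nat.eq_dec t k). lia. destruct (Nat.eq_dec t l). lia.
    pose proof (Hwin t Ht). pose proof (distinct_residues_neq j t k Hres Ht Hk n0).
    pose proof (distinct_residues_neq j t l Hres Ht Hl n1). lia.
  - apply (distinct_residues_swap j j' k l Hk Hl Hres). intros t Ht. unfold j', swap_idx.
    destruct (Nat.eq_dec t k). rewrite Hjl, Zmod_minus_n. auto.
    destruct (Nat.eq_dec t l). rewrite Hjk, Zmod_plus_n. auto. auto.
  - assert (Hshift : T (hi - Z.of_nat n)%Z = T hi - 1).
    { pose proof (T_period (hi - Z.of_nat n)%Z) as E.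
      replace (hi - Z.of_nat n + Z.of_nat n)%Z with hi in E by ring. lra. }
    assert (Hspread : a l <= a k + 1) by (apply a_spread; auto).
    assert (Hcross : T lo + 1 <= T hi) by (rewrite <- T_period; apply T_mono; lia).
    unfold assign_cost.
    apply (cost_uncross e n _ _ k l (a k + 1) (a l) (T lo + 1) (T hi)); auto;
      intros; unfold j'; repeat destruct Nat.eq_dec; try lia;
      rewrite ?Hjk, ?Hjl, ?Hshift, ?T_period; auto; ring.
Qed.

Lemma consecutive_assignment N j lo hi : (hi - lo <= Z.of_nat N)%Z ->
  in_window j lo hi -> distinct_residues j ->
  exists s, (lo <= s <= hi)%Z /\ assign_cost (fun i => s + Z.of_nat i)%Z <= assign_cost j.
Proof.
  revert j lo hi. induction N as [|N IHN]; intros j lo hi HN Hwin Hres;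
    (destruct (Z_le_gt_dec (hi - lo) (Z.of_nat n - 1)) as [Hnarrow|Hwide];
      [apply (consecutive_of_narrow j lo hi); auto|]).
  - lia.
  - destruct (shrink_window j lo hi ltac:(lia) Hwin Hres)
      as [j' [lo' [hi' [Hlo [Hhi [Hless [Hwin' [Hres' Hcost]]]]]]]].
    destruct (IHN j' lo' hi' ltac:(lia) Hwin' Hres') as [s [Hs Hcost']].
    exists s. split. lia. lra.
Qed.

End Rearrangement.

Lemma mod1_bound x : 0 <= mod1 x < 1.
Proof. unfold mod1, floorZ. rewrite minus_IZR. pose proof (archimed x). simpl. lra. Qed.

Lemma mod1_floor x : x = mod1 x + IZR (floorZ x).
Proof. unfold mod1. ring. Qed.

Lemma floorZ_01 a : 0 <= a < 2 -> (0 <= floorZ a <= 1)%Z.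
Proof.
  intros Ha. pose proof (mod1_bound a). pose proof (mod1_floor a).
  assert (-1 < IZR (floorZ a) < 2) as [H1 H2] by lra.
  apply lt_IZR in H1. apply lt_IZR in H2. lia.
Qed.

(* The integer k in {-1, 0, 1} such that circ_dist u v = |u - v - k|. *)
Definition wrap (u v : R) : Z :=
  if Rle_dec (Rabs (u - v)) (1 - Rabs (u - v)) then 0%Z
  else if Rle_dec v u then 1%Z else (-1)%Z.

Lemma circ_dist_wrap u v : 0 <= u < 1 -> 0 <= v < 1 ->
  circ_dist u v = Rabs (u - v - IZR (wrap u v)) /\ (-1 <= wrap u v <= 1)%Z.
Proof.
  intros Hu Hv. unfold circ_dist, wrap, Rmin.
  destruct (Rle_dec (Rabs (u - v)) (1 - Rabs (u - v))); simpl.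
  - split. rewrite Rminus_0_r. auto. lia.
  - destruct (Rle_dec v u); simpl; split; try lia.
    + rewrite (Rabs_right (u - v)) by lra. rewrite Rabs_left by lra. lra.
    + rewrite (Rabs_left (u - v)) by lra. rewrite Rabs_right by lra. lra.
Qed.

Lemma circ_dist_ge0 u v : 0 <= u < 1 -> 0 <= v < 1 -> 0 <= circ_dist u v.
Proof. intros. destruct (circ_dist_wrap u v) as [-> _]; auto. apply Rabs_pos. Qed.

Lemma circ_dist_le_translate u v m : 0 <= u < 1 -> 0 <= v < 1 ->
  circ_dist u v <= Rabs (u - v + IZR m).
Proof.
  intros Hu Hv. unfold circ_dist.
  destruct (Z.eq_dec m 0) as [->|Hm].
  - simpl. rewrite Rplus_0_r. apply Rmin_l.
  - eapply Rle_trans; [apply Rmin_r|].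
    destruct (Z_le_gt_dec 1 m) as [H|H].
    + apply IZR_le in H. simpl in H.
      rewrite (Rabs_right (u - v + IZR m)) by lra. unfold Rabs; destruct Rcase_abs; lra.
    + assert (m <= -1)%Z as H' by lia. apply IZR_le in H'. simpl in H'.
      rewrite (Rabs_left (u - v + IZR m)) by lra. unfold Rabs; destruct Rcase_abs; lra.
Qed.

Lemma unroll_period n y j : (1 <= n)%nat -> unroll n y (j + Z.of_nat n)%Z = unroll n y j + 1.
Proof.
  intros Hn. unfold unroll. rewrite Zmod_plus_n.
  replace (j + Z.of_nat n)%Z with (j + 1 * Z.of_nat n)%Z by ring.
  rewrite Z_div_plus_full by lia. rewrite plus_IZR. simpl. ring.
Qed.

Lemma unroll_at n y r m : (r < n)%nat ->
  unroll n y (Z.of_nat r + Z.of_nat n * m)%Z = y r + IZR m.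
Proof.
  intros Hr. unfold unroll. rewrite (Z.mul_comm (Z.of_nat n) m).
  rewrite Z_mod_plus_full, Z_div_plus_full by lia.
  rewrite Z.mod_small, Z.div_small by lia. rewrite Nat2Z.id. simpl. ring.
Qed.

Lemma unroll_mono n y j k : (1 <= n)%nat -> sorted01 n y -> (j <= k)%Z ->
  unroll n y j <= unroll n y k.
Proof.
  intros Hn [Hy1 Hy2] Hjk. unfold unroll.
  set (N := Z.of_nat n). assert (HN : (0 < N)%Z) by (unfold N; lia).
  pose proof (Z.div_le_mono j k N HN Hjk).
  pose proof (Z.mod_pos_bound j N HN). pose proof (Z.mod_pos_bound k N HN).
  assert (Hj : (Z.to_nat (j mod N) < n)%nat) by (unfold N in *; lia).
  assert (Hk : (Z.to_nat (k mod N) < n)%nat) by (unfold N in *; lia).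
  pose proof (Hy1 _ Hj). pose proof (Hy1 _ Hk).
  destruct (Z.eq_dec (j / N) (k / N)) as [E|E].
  -
    rewrite E. apply Rplus_le_compat_r. apply Hy2. split; [|auto].
    pose proof (Z.div_mod j N ltac:(lia)). pose proof (Z.div_mod k N ltac:(lia)).
    apply Z2Nat.inj_le; lia.
  -
    assert (j / N + 1 <= k / N)%Z as H4 by lia.
    apply IZR_le in H4. rewrite plus_IZR in H4. simpl in H4. lra.
Qed.

(* The circular objective at (c mod 1, s mod n) is at most the linear one at
   (c, s): termwise, the linear residual is a circular residual translated by
   an integer. *)
Lemma circ_le_lin e n x y c s : (1 <= n)%nat -> valid_expo e -> sorted01 n y ->
  circ_obj e n x y (mod1 c) (Z.to_nat (s mod Z.of_nat n)) <= lin_obj e n x y c s.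
Proof.
  intros Hn He [Hy1 _]. unfold circ_obj, lin_obj. apply lp_norm_le_abs; auto.
  intros i Hi. set (s' := Z.to_nat (s mod Z.of_nat n)).
  assert (Hs : (0 <= s mod Z.of_nat n < Z.of_nat n)%Z) by (apply Z.mod_pos_bound; lia).
  assert (Hr : (0 <= (Z.of_nat i + s) mod Z.of_nat n < Z.of_nat n)%Z)
    by (apply Z.mod_pos_bound; lia).
  assert (E : ((i + s') mod n)%nat = Z.to_nat ((Z.of_nat i + s) mod Z.of_nat n)).
  { apply Nat2Z.inj. rewrite Nat2Z.inj_mod, Nat2Z.inj_add. unfold s'.
    rewrite Z2Nat.id by lia. rewrite Zplus_mod_idemp_r, Z2Nat.id by lia. auto. }
  rewrite E. unfold unroll.
  set (r := Z.to_nat ((Z.of_nat i + s) mod Z.of_nat n)).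
  pose proof (Hy1 r ltac:(unfold r; lia)).
  pose proof (mod1_bound (x i + mod1 c)).
  rewrite Rabs_Rabsolu, Rabs_right by (apply Rle_ge, circ_dist_ge0; auto).
  replace (x i + c - (y r + IZR ((Z.of_nat i + s) / Z.of_nat n)))
    with (mod1 (x i + mod1 c) - y r
          + IZR (floorZ (x i + mod1 c) + floorZ c - (Z.of_nat i + s) / Z.of_nat n)).
  - apply circ_dist_le_translate; auto.
  - rewrite !minus_IZR, plus_IZR.
    pose proof (mod1_floor (x i + mod1 c)). pose proof (mod1_floor c). lra.
Qed.

Lemma shift_mod_inj n s i k : (i < n)%nat -> (k < n)%nat ->
  ((i + s) mod n = (k + s) mod n)%nat -> i = k.
Proof.
  intros Hi Hk E.
  pose proof (Nat.div_mod_eq (i + s) n). pose proof (Nat.div_mod_eq (k + s) n).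
  rewrite E in *. destruct (Nat.lt_total ((i + s) / n) ((k + s) / n)) as [|[|]]; nia.
Qed.

Lemma lin_obj_signed e n x y c s : valid_expo e -> lin_obj e n x y c s =
  lp_norm e n (fun i => x i + c - unroll n y (Z.of_nat i + s)%Z).
Proof.
  intros He. unfold lin_obj.
  apply Rle_antisym; apply lp_norm_le_abs; auto; intros; rewrite Rabs_Rabsolu; apply Rle_refl.
Qed.

(* Each circular configuration (c, s) is dominated by a linear one (c, s')
   with s' in [-n, 3n]: write every circular distance as |a_i - y~_(j i)|
   with j i = sigma i + n m_i, m_i in {-1,...,2}, where sigma i = (i + s) mod n
   has distinct residues, and apply the rearrangement lemma. *)
Lemma lin_le_circ e n x y c s : (1 <= n)%nat -> valid_expo e ->
  sorted01 n x -> sorted01 n y -> 0 <= c < 1 ->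
  exists s', (- Z.of_nat n <= s' <= 3 * Z.of_nat n)%Z /\
    lin_obj e n x y c s' <= circ_obj e n x y c s.
Proof.
  intros Hn He [Hx1 Hx2] Hy Hc. pose proof Hy as [Hy1 _].
  set (a := fun i => x i + c).
  set (sigma := fun i => ((i + s) mod n)%nat).
  set (m := fun i => (floorZ (a i) + wrap (mod1 (a i)) (y (sigma i)))%Z).
  set (j := fun i => (Z.of_nat (sigma i) + Z.of_nat n * m i)%Z).
  assert (Hsigma : forall i, (sigma i < n)%nat) by (intros; apply Nat.mod_upper_bound; lia).
  assert (Hterm : forall i, (i < n)%nat ->
    Rabs (a i - unroll n y (j i)) = circ_dist (mod1 (x i + c)) (y ((i + s) mod n)%nat)).
  { intros i Hi. unfold j. rewrite unroll_at by auto.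
    pose proof (mod1_bound (a i)).
    destruct (circ_dist_wrap (mod1 (a i)) (y (sigma i))) as [Hw _]; auto.
    fold (a i). fold (sigma i). rewrite Hw. f_equal. unfold m. rewrite plus_IZR.
    pose proof (mod1_floor (a i)). lra. }
  assert (Hwin : in_window n j (- Z.of_nat n) (3 * Z.of_nat n)).
  { intros i Hi. unfold j, m.
    pose proof (Hsigma i). pose proof (Hx1 i Hi).
    pose proof (floorZ_01 (a i) ltac:(unfold a; lra)).
    pose proof (mod1_bound (a i)).
    destruct (circ_dist_wrap (mod1 (a i)) (y (sigma i))) as [_ Hw]; auto. nia. }
  assert (Hres : distinct_residues n j).
  { intros i k Hi Hk Hne. unfold j.
    rewrite !(Z.mul_comm (Z.of_nat n)), !Z_mod_plus_full.
    rewrite !Z.mod_small by (pose proof (Hsigma i); pose proof (Hsigma k); lia).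
    intro E. apply Hne. apply Nat2Z.inj in E. apply (shift_mod_inj n s); auto. }
  destruct (consecutive_assignment n e a (unroll n y) Hn He
              (fun j k => unroll_mono n y j k Hn Hy) (fun j => unroll_period n y j Hn)
              ltac:(intros i k Hik; pose proof (Hx2 i k Hik); unfold a; lra)
              ltac:(intros i k Hi Hk; pose proof (Hx1 i Hi); pose proof (Hx1 k Hk);
                    unfold a; lra)
              (4 * n) j (- Z.of_nat n)%Z (3 * Z.of_nat n)%Z ltac:(lia) Hwin Hres)
    as [s' [Hs' Hcost]].
  exists s'. split; auto.
  rewrite lin_obj_signed by auto. unfold circ_obj. apply lp_norm_le_of_cost; auto.
  unfold assign_cost in Hcost. eapply Rle_trans; [|eapply Rle_trans; [apply Hcost|]].
  - right. apply cost_eq_abs; auto. intros. unfold a. rewrite Z.add_comm. auto.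
  - right. apply cost_eq_abs; auto. intros i Hi. rewrite Hterm by auto.
    rewrite Rabs_right; auto. apply Rle_ge, circ_dist_ge0. apply mod1_bound. apply Hy1, Hsigma.
Qed.

(* The linear objective attains its infimum: minimize it over the compact box
   [0,1] x [-n, 3n], which is enough by circ_le_lin and lin_le_circ. *)
Lemma lin_obj_has_min e n x y : (1 <= n)%nat -> valid_expo e ->
  sorted01 n x -> sorted01 n y ->
  exists cs ss, forall c s, lin_obj e n x y cs ss <= lin_obj e n x y c s.
Proof.
  intros Hn He Hx Hy.
  set (F := fun c s => cost e n (fun i => x i + c - unroll n y (Z.of_nat i + s)%Z)).
  assert (HF : forall s c, continuous (fun c => F c s) c).
  { intros s c. apply cost_continuous; auto. intros i.
    apply (continuous_minus (fun c => x i + c) (fun _ => unroll n y (Z.of_nat i + s)%Z)).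
    - apply (continuous_plus (fun _ => x i) (fun c => c)).
      apply continuous_const. apply continuous_id.
    - apply continuous_const. }
  destruct (min_on_box F (- Z.of_nat n)%Z HF (4 * n)) as [cs [ss [_ [_ Hmin]]]].
  exists cs, ss. intros c s.
  pose proof (mod1_bound c) as Hc.
  destruct (lin_le_circ e n x y (mod1 c) (Z.to_nat (s mod Z.of_nat n)) Hn He Hx Hy Hc)
    as [s' [Hs' Hlin]].
  pose proof (circ_le_lin e n x y c s Hn He Hy).
  assert (lin_obj e n x y cs ss <= lin_obj e n x y (mod1 c) s').
  { rewrite !lin_obj_signed by auto. apply lp_norm_le_of_cost; auto.
    apply Hmin; lra || lia. }
  lra.
Qed.

(* The circular problem attains its minimum, and its minimum value is the
   infimum of the linear problem: both equal the linear minimum at (cs, ss),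
   which is attained circularly at (cs mod 1, ss mod n). *)
Theorem mainTheorem1 (n : nat) (e : expo) (x y : nat -> R) :
  (1 <= n)%nat -> valid_expo e -> sorted01 n x -> sorted01 n y ->
  exists c0 s0,
    0 <= c0 < 1 /\ (s0 < n)%nat /\
    (forall c s, 0 <= c < 1 -> (s < n)%nat ->
       circ_obj e n x y c0 s0 <= circ_obj e n x y c s) /\
    is_inf (fun v => exists c s, v = lin_obj e n x y c s) (circ_obj e n x y c0 s0).
Proof.
  intros Hn He Hx Hy.
  destruct (lin_obj_has_min e n x y Hn He Hx Hy) as [cs [ss Hmin]].
  set (c0 := mod1 cs). set (s0 := Z.to_nat (ss mod Z.of_nat n)).
  assert (Hs0 : (s0 < n)%nat).
  { pose proof (Z.mod_pos_bound ss (Z.of_nat n) ltac:(lia)). unfold s0; lia. }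
  assert (Hbelow : forall c s, 0 <= c < 1 -> (s < n)%nat ->
            lin_obj e n x y cs ss <= circ_obj e n x y c s).
  { intros c s Hc _. destruct (lin_le_circ e n x y c s Hn He Hx Hy Hc) as [s' [_ H]].
    pose proof (Hmin c s'). lra. }
  assert (Hequal : circ_obj e n x y c0 s0 = lin_obj e n x y cs ss).
  { apply Rle_antisym. apply circ_le_lin; auto. apply Hbelow; auto. apply mod1_bound. }
  exists c0, s0. split; [apply mod1_bound|]. split; [auto|]. rewrite Hequal. split.
  - intros c s Hc Hs. apply Hbelow; auto.
  - split.
    + intros z [c [s ->]]. apply Hmin.
    + intros b Hb. apply Hb. eauto.
Qed.
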